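(* Let $\lambda>0$, $p\in(0,1]$, $\alpha>2$, $d>0$, $\theta>0$, $R=\log(1+\theta)$, and $\lambda_{max}=\frac{1}{d^2\theta^{2/\alpha}\kappa(\alpha)}$ with $\kappa(\alpha)=\frac{2\pi^2}{\alpha\sin(2\pi/\alpha)}$. For $q\in(0,1]$ let $r(q)=\min\{p/q,1\}$ and $$C(q)=\lambda\, r(q)\, q\,\exp\!\Big(-\frac{\lambda\, r(q)\, q}{\lambda_{max}}\Big)R .$$ If $p>\frac{\lambda_{max}}{\lambda}$, then $q^\star=\frac{\lambda_{max}}{\lambda}$ maximizes $C$ over $(0,1]$. Otherwise (i.e. if $p\le \frac{\lambda_{max}}{\lambda}$), every $q\in[p,1]$ maximizes $C$ over $(0,1]$.
   Context: Model: transmitters of a wireless ad hoc network are located according to a homogeneous Poisson point process of density $\lambda$ in $\mathbb{R}^2$, each with its receiver at distance $d$; path-loss exponent $\alpha$, Rayleigh fading, interference-limited, and a transmission succeeds if the signal-to-interference ratio exceeds $\theta$. Each transmitter harvests one unit of energy per time slot with probability $p$ (i.i.d. Bernoulli), stores it in a battery of infinite capacity, and, whenever its stored energy is at least $1$, transmits with unit power (spending one unit) with probability $q$ (ALOHA). The stationary probability that the battery is nonempty is $r(q)=\min\{p/q,1\}$, and the transmission capacity (density of active transmitters times success probability times rate $R$) equals $C(q)$ above. The ALOHA transmission probability is called optimal if it maximizes $C$. *)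

From Stdlib Require Import Reals.
Open Scope R_scope.

Definition kappa (alpha : R) : R := 2 * PI ^ 2 / (alpha * sin (2 * PI / alpha)).

Definition lambda_max (alpha d theta : R) : R :=
  1 / (d ^ 2 * Rpower theta (2 / alpha) * kappa alpha).

Definition rate (theta : R) : R := ln (1 + theta).

Definition r_nonempty (p q : R) : R := Rmin (p / q) 1.

Definition capacity (lambda p alpha d theta q : R) : R :=
  lambda * r_nonempty p q * q
  * exp (- (lambda * r_nonempty p q * q) / lambda_max alpha d theta)
  * rate theta.

Definition is_optimal (lambda p alpha d theta q : R) : Prop :=
  0 < q <= 1 /\
  forall q', 0 < q' <= 1 ->
    capacity lambda p alpha d theta q' <= capacity lambda p alpha d theta q.

(* With [x = lambda * min p q] the active density, C is [f x * rate theta] where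
   [f x = x * exp (- x / L)] and [L = lambda_max].  From [exp y >= 1 + y] one gets
   that [f] attains its global maximum at [x = L] and is nondecreasing on [(0, L]].
   If [p > L / lambda], the choice [q = L / lambda] realizes [x = L].  Otherwise
   [x <= lambda * p <= L] for every [q], and every [q >= p] realizes [x = lambda * p]. *)

From Stdlib Require Import Reals Lra.
Open Scope R_scope.

Lemma kappa_pos (alpha : R) : 2 < alpha -> 0 < kappa alpha.
Proof.
  intros Ha. unfold kappa.
  assert (HPI := PI_RGT_0).
  assert (Hsin : 0 < sin (2 * PI / alpha)).
  { apply sin_gt_0.
    - apply Rdiv_lt_0_compat; lra.
    - apply (Rmult_lt_reg_r alpha); [lra|]. unfold Rdiv.
      rewrite Rmult_assoc, Rinv_l by lra. nra. }
  apply Rdiv_lt_0_compat; [simpl; nra | nra].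
Qed.

Lemma lambda_max_pos (alpha d theta : R) :
  2 < alpha -> 0 < d -> 0 < lambda_max alpha d theta.
Proof.
  intros Ha Hd. unfold lambda_max.
  assert (Hk := kappa_pos alpha Ha).
  assert (0 < Rpower theta (2 / alpha)) by (unfold Rpower; apply exp_pos).
  apply Rdiv_lt_0_compat; [lra|].
  apply Rmult_lt_0_compat; [apply Rmult_lt_0_compat; [simpl; nra | lra] | lra].
Qed.

Lemma rate_pos (theta : R) : 0 < theta -> 0 < rate theta.
Proof. intros Ht. unfold rate. rewrite <- ln_1. apply ln_increasing; lra. Qed.

Lemma r_nonempty_mul (p q : R) : 0 < q -> r_nonempty p q * q = Rmin p q.
Proof.
  intros Hq. unfold r_nonempty, Rmin.
  destruct (Rle_dec (p / q) 1) as [Hpq1|Hpq1]; destruct (Rle_dec p q) as [Hpq|Hpq].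
  - field; lra.
  - exfalso. apply Hpq.
    apply (Rmult_le_reg_r (/ q)); [apply Rinv_0_lt_compat; lra|].
    rewrite Rinv_r by lra. exact Hpq1.
  - exfalso. apply Hpq1. unfold Rdiv.
    apply (Rmult_le_reg_r q); [lra|].
    rewrite Rmult_assoc, Rinv_l by lra. lra.
  - lra.
Qed.

Lemma capacity_Rmin (lambda p alpha d theta q : R) : 0 < q ->
  capacity lambda p alpha d theta q =
  lambda * Rmin p q * exp (- (lambda * Rmin p q) / lambda_max alpha d theta)
  * rate theta.
Proof.
  intros Hq. unfold capacity.
  rewrite (Rmult_assoc lambda), r_nonempty_mul by exact Hq.
  reflexivity.
Qed.

Lemma xexp_le_max (L x : R) : 0 < L -> x * exp (- x / L) <= L * exp (- L / L).
Proof.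
  intros HL.
  assert (Hineq := exp_ineq1_le (x / L - 1)).
  assert (Hexp := exp_pos (- x / L)).
  replace (- L / L) with (- x / L + (x / L - 1)) by (field; lra).
  rewrite exp_plus.
  replace x with (L * (1 + (x / L - 1))) at 1 by (field; lra).
  assert (0 <= L * exp (- x / L) * (exp (x / L - 1) - (1 + (x / L - 1))))
    by (apply Rmult_le_pos; nra).
  nra.
Qed.

Lemma xexp_le_increasing (L x' x : R) :
  0 < x' <= x -> x <= L -> x' * exp (- x' / L) <= x * exp (- x / L).
Proof.
  intros [Hx' Hx'x] HxL.
  (* [exp ((x' - x) / x) >= x' / x], and the exponent only grows when [x] is replaced by [L]. *)
  assert (Hdiv : (x' - x) / x <= (x' - x) / L).
  { unfold Rdiv. apply Rmult_le_compat_neg_l; [lra|].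
    apply Rinv_le_contravar; lra. }
  assert (Hineq := exp_ineq1_le ((x' - x) / x)).
  replace (1 + (x' - x) / x) with (x' / x) in Hineq by (field; lra).
  assert (Hmono : exp ((x' - x) / x) <= exp ((x' - x) / L)).
  { destruct (Rle_lt_or_eq_dec _ _ Hdiv) as [Hlt|Heq].
    - left. apply exp_increasing. exact Hlt.
    - rewrite Heq. lra. }
  assert (Hx'_le : x' <= x * exp ((x' - x) / L)).
  { assert (x' / x * x = x') by (field; lra). nra. }
  replace (- x / L) with ((x' - x) / L + - x' / L) by (field; lra).
  rewrite exp_plus.
  assert (Hexp := exp_pos (- x' / L)). nra.
Qed.

Theorem theorem1 (lambda p alpha d theta : R)
  (Hl : 0 < lambda) (Hp : 0 < p <= 1) (Ha : 2 < alpha) (Hd : 0 < d) (Ht : 0 < theta) :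
  (p > lambda_max alpha d theta / lambda ->
     is_optimal lambda p alpha d theta (lambda_max alpha d theta / lambda)) /\
  (p <= lambda_max alpha d theta / lambda ->
     forall q, p <= q <= 1 -> is_optimal lambda p alpha d theta q).
Proof.
  assert (HL := lambda_max_pos alpha d theta Ha Hd).
  assert (HR := rate_pos theta Ht).
  set (L := lambda_max alpha d theta) in *.
  assert (HqL : 0 < L / lambda) by (apply Rdiv_lt_0_compat; lra).
  split.
  - intros HpL. split; [lra|].
    intros q' Hq'. rewrite !capacity_Rmin by lra. fold L.
    rewrite (Rmin_right p (L / lambda)) by lra.
    replace (lambda * (L / lambda)) with L by (field; lra).
    apply Rmult_le_compat_r; [lra|]. now apply xexp_le_max.
  - intros HpL q Hq. split; [lra|].
    intros q' Hq'. rewrite !capacity_Rmin by lra. fold L.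
    rewrite (Rmin_left p q) by lra.
    assert (HlpL : lambda * p <= L).
    { apply (Rmult_le_reg_r (/ lambda)); [apply Rinv_0_lt_compat; lra|].
      replace (lambda * p * / lambda) with p by (field; lra). exact HpL. }
    assert (Hmin : 0 < lambda * Rmin p q' <= lambda * p).
    { split.
      - apply Rmult_lt_0_compat; [lra|]. apply Rmin_glb_lt; lra.
      - apply Rmult_le_compat_l; [lra|]. apply Rmin_l. }
    apply Rmult_le_compat_r; [lra|]. now apply xexp_le_increasing.
Qed.
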